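(* Let $b\ge2$ be an integer and let $w$ be a fixed block of $b$-ary digits of length $p\ge1$. Let $s$ be any string of $b$-ary digits of length $\ell\ge0$. Let $$k_w^*(s)=\max_{|z|=p-1}k_w(sz),$$ where the maximum is over all strings $z$ of length $p-1$. Then for every integer $k\ge 1+k_w^*(s)$, $$\sum_{X:\;k_w(X)=k,\ X\text{ has prefix }s} b^{-|X|}=b^{p}\,b^{-\ell}.$$ In particular, for every $k\ge1$, $$Z_w(k)(b^{-1})=\sum_{X:\,k_w(X)=k}b^{-|X|}=b^p.$$
   Context: Strings are finite sequences over $\{0,\dots,b-1\}$, including the empty string $\epsilon$. $|X|$ is the length of $X$, and $sz$ is concatenation. $k_w(X)$ is the number of possibly overlapping occurrences of $w$ in $X$: indices $i$ with $x_i\dots x_{i+p-1}=w$. A string $X$ is $k$-admissible if $k_w(X)=k$. $N_w(k,l)$ is the number of $k$-admissible strings of length $l$, and $Z_w(k)=\sum_{l\ge0}N_w(k,l)t^l$. *)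

From HB Require Import structures.
From mathcomp Require Import all_boot all_order all_algebra.
From mathcomp Require Import all_classical all_reals all_analysis.
Set Implicit Arguments. Unset Strict Implicit. Unset Printing Implicit Defensive.
Import Order.TTheory GRing.Theory Num.Theory.

Definition kw (b : nat) (w X : seq 'I_b) : nat :=
  count (fun i => take (size w) (drop i X) == w) (iota 0 (size X)).

Definition kw_star (b : nat) (w s : seq 'I_b) : nat :=
  \max_(z : (size w).-1.-tuple 'I_b) kw w (s ++ z).

Definition Nw (b : nat) (w : seq 'I_b) (k l : nat) : nat :=
  #|[set X : l.-tuple 'I_b | kw w X == k]|.

From HB Require Import structures.
From mathcomp Require Import all_boot all_order all_algebra.
From mathcomp Require Import all_classical all_reals all_analysis.
From mathcomp Require Import zify ring lra.
Set Implicit Arguments.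
Unset Strict Implicit.
Unset Printing Implicit Defensive.
Import Order.TTheory GRing.Theory Num.Theory.
Local Open Scope classical_set_scope.
Local Open Scope ring_scope.

(* Append uniformly random letters to a word.  With
   c(X) = \sum_(i < p) b^i [take i w is a suffix of X], the potential
   Phi_j(X) = b^p if k_w(X) > j, c(X) - c(w) if k_w(X) = j, and 0 otherwise,
   satisfies E Phi_j(X a) = Phi_j(X) + [k_w(X) = j] for a uniform letter a, and
   |Phi_j| <= b^p.  Telescoping, \sum_(m < n) P(k_w(X T_m) = j) equals
   E Phi_j(X T_n) - Phi_j(X) for uniform words T_m of length m.  So the partial
   sums of the nonincreasing P(k_w(s T_n) <= k) are bounded, which makes it
   O(1/n), and when k_w(s) < k the sums tend to b^p.  Weighting words by
   b^-|X| turns these probabilities into the sums of the statement; only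
   k_w(s) < k is needed, not k > k_w^*(s). *)

Section PrefixSuffix.
Variable T : eqType.
Implicit Types (s t : seq T) (x : T).

Lemma prefix_rconsE s t x : prefix s (rcons t x) = prefix s t || (s == rcons t x).
Proof.
elim: t s => [|y t IHt] [|z s] //=.
by rewrite IHt eqseq_cons andb_orr.
Qed.

Lemma suffix_consE s t x : suffix s (x :: t) = suffix s t || (s == x :: t).
Proof.
by rewrite /suffix rev_cons prefix_rconsE -rev_cons (inj_eq (can_inj revK)).
Qed.

Lemma suffix_cat_le s t u : (size s <= size u)%N -> suffix s (t ++ u) = suffix s u.
Proof.
move=> le_su; rewrite !suffixE size_cat -addnBA // drop_cat.
by rewrite ltnNge leq_addr /= addKn.
Qed.

End PrefixSuffix.

Section Occurrences.
Variables (b : nat) (w : seq 'I_b).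
Local Notation p := (size w).
Implicit Types (X Y : seq 'I_b) (a : 'I_b).

Lemma kw_cons a X : kw w (a :: X) = (prefix w (a :: X) + kw w X)%N.
Proof.
by rewrite prefixE /kw /= (iotaDl 1 0) count_map.
Qed.

Hypothesis w_neq0 : w != [::].

Lemma kw_rcons X a : kw w (rcons X a) = (kw w X + suffix w (rcons X a))%N.
Proof.
elim: X => [|x X IHX] /=.
  rewrite kw_cons addnC; congr (_ + _)%N.
  have := @prefix_rconsE _ w [::] a; have := @suffix_consE _ w [::] a.
  by rewrite prefixs0 suffixs0 (negPf w_neq0) !orFb => -> ->.
rewrite !kw_cons IHX suffix_consE -rcons_cons prefix_rconsE.
case: eqP => [->|_]; last by rewrite !orbF addnA.
have /negPf-> : ~~ prefix (rcons (x :: X) a) (x :: X).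
  by apply/negP => /size_prefix; rewrite size_rcons ltnn.
have /negPf-> : ~~ suffix (rcons (x :: X) a) (rcons X a).
  by apply/negP => /size_suffix; rewrite !size_rcons ltnn.
by rewrite /= addn0 add0n addnC.
Qed.

Lemma leq_kw_rcons X a : (kw w X <= kw w (rcons X a))%N.
Proof. by rewrite kw_rcons leq_addr. Qed.

Lemma leq_kw_cat X Y : (kw w X <= kw w (X ++ Y))%N.
Proof.
elim/last_ind: Y => [|Y a IHY]; first by rewrite cats0.
by rewrite -rcons_cat (leq_trans IHY (leq_kw_rcons _ _)).
Qed.

Lemma leq_kw_star X : (kw w X <= kw_star w X)%N.
Proof.
have [x0 _] : exists x0 : 'I_b, true by case: (w) w_neq0 => // x0; exists x0.
exact: leq_trans (leq_kw_cat X (nseq_tuple _ x0)) (leq_bigmax (nseq_tuple _ x0)).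
Qed.

Lemma suffix_take_rcons x0 i X a : (i < p)%N ->
  suffix (take i.+1 w) (rcons X a) = (nth x0 w i == a) && suffix (take i w) X.
Proof. by move=> lt_ip; rewrite (take_nth x0 lt_ip) suffix_rcons. Qed.

Lemma suffix_take_suffix i Y : suffix w Y -> suffix (take i w) Y = suffix (take i w) w.
Proof. by move=> /suffixP[Y' ->]; rewrite suffix_cat_le // size_take_min geq_minr. Qed.

End Occurrences.

Section Mean.
Variables (R : realType) (b : nat).
Local Notation q := (b%:R : R).
Implicit Types (f g : seq 'I_b -> R) (X Y t : seq 'I_b).

Fixpoint words n : seq (seq 'I_b) :=
  if n is m.+1 then [seq a :: t | a <- index_enum 'I_b, t <- words m] else [:: [::]].

Lemma mem_words n t : (t \in words n) = (size t == n).
Proof.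
elim: n t => [|n IHn] t; first by case: t.
apply/allpairsP/idP => [[[x u] [_ /= hu ->]]|]; first by rewrite /= eqSS -IHn.
case: t => [|a t] //=; rewrite eqSS -IHn => ht.
by exists (a, t); split => //; exact: mem_index_enum.
Qed.

Lemma uniq_words n : uniq (words n).
Proof.
elim: n => [|n IHn] //=; apply: allpairs_uniq => //; first exact: index_enum_uniq.
by move=> [x t] [y u] _ _ /= [-> ->].
Qed.

Definition mean f n X : R := q ^- n * \sum_(t <- words n) f (X ++ t).

Lemma mean0 f X : mean f 0 X = f X.
Proof. by rewrite /mean /= expr0 invr1 mul1r big_seq1 cats0. Qed.

Lemma meanS f n X : mean f n.+1 X = q^-1 * \sum_(a : 'I_b) mean f n (rcons X a).
Proof.
rewrite /mean /= big_allpairs_dep exprS invfM -mulrA mulr_sumr; congr (_ * _).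
by apply: eq_bigr => a _; under eq_bigr do rewrite -cat_rcons.
Qed.

Lemma ler_mean f g n X : (forall Y, f Y <= g Y) -> mean f n X <= mean g n X.
Proof. by move=> le_fg; rewrite ler_wpM2l ?invr_ge0 ?exprn_ge0 // ler_sum. Qed.

Lemma mean_sum (I : finType) (g : I -> seq 'I_b -> R) n X :
  mean (fun Y => \sum_i g i Y) n X = \sum_i mean (g i) n X.
Proof. by rewrite /mean exchange_big mulr_sumr. Qed.

Hypothesis b_gt0 : (0 < b)%N.

Lemma mean_affine c d f n X :
  mean (fun Y => c + d * f Y) n X = c + d * mean f n X.
Proof.
have q_neq0 : q != 0 by rewrite pnatr_eq0 -lt0n.
elim: n X => [|n IHn] X; first by rewrite !mean0.
rewrite !meanS; under eq_bigr do rewrite IHn.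
rewrite big_split /= sumr_const card_ord -[c *+ b]mulr_natl -mulr_sumr.
by rewrite mulrDr mulrA mulVf // mul1r mulrCA.
Qed.

Lemma mean_cst c n X : mean (fun=> c) n X = c.
Proof.
transitivity (mean (fun Y => c + 0 * (fun=> 0) Y) n X).
  by congr mean; apply/funext => Y; rewrite mul0r addr0.
by rewrite mean_affine mul0r addr0.
Qed.

Lemma mean_nonincreasing f X : (forall Y a, f (rcons Y a) <= f Y) ->
  forall m n, (m <= n)%N -> mean f n X <= mean f m X.
Proof.
move=> f_rcons m n; apply: (Order.NatMonotonyTheory.nonincnP (f := mean f ^~ X)) => {m n} n.
elim: n X => [|n IHn] X.
  rewrite meanS mean0; under eq_bigr do rewrite mean0.
  rewrite ler_pdivrMl ?ltr0n //.
  have -> : b%:R * f X = \sum_(a < b) f X by rewrite sumr_const card_ord mulr_natl.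
  by apply: ler_sum => a _; exact: f_rcons.
by rewrite [leLHS]meanS [leRHS]meanS ler_wpM2l ?invr_ge0 // ler_sum.
Qed.

End Mean.

Section Potential.
Variables (R : realType) (b : nat) (w : seq 'I_b).
Hypotheses (b_ge2 : (2 <= b)%N) (w_neq0 : w != [::]).
Local Notation p := (size w).
Local Notation q := (b%:R : R).
Local Notation mean := (@mean R b).
Implicit Types (X Y : seq 'I_b) (a : 'I_b).

Let b_gt0 : (0 < b)%N. Proof. exact: leq_trans b_ge2. Qed.

Let q_neq0 : q != 0. Proof. by rewrite pnatr_eq0 -lt0n. Qed.

Let qXp_ge0 : 0 <= q ^+ p. Proof. by rewrite exprn_ge0 ?ler0n. Qed.

Definition overlap n X : R := \sum_(i < n) q ^+ i * (suffix (take i w) X)%:R.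

Local Notation corr := (overlap p).

Lemma overlapS n X : overlap n.+1 X = overlap n X + q ^+ n * (suffix (take n w) X)%:R.
Proof. exact: big_ord_recr. Qed.

Lemma overlap_ge0 n X : 0 <= overlap n X.
Proof. by apply: sumr_ge0 => i _; rewrite mulr_ge0 ?exprn_ge0 ?ler0n. Qed.

Lemma overlap_le n X : overlap n X <= q ^+ n.
Proof.
have le_sum : overlap n X <= \sum_(i < n) q ^+ i.
  by apply: ler_sum => i _; rewrite ler_piMr ?exprn_ge0 ?ler0n // lern1 leq_b1.
have sum_ge0 : 0 <= \sum_(i < n) q ^+ i by apply: sumr_ge0 => i _; rewrite exprn_ge0 ?ler0n.
have q_ge2 : 2 <= q by rewrite ler_nat.
have := subrX1 q n; nra.
Qed.

Lemma overlap_suffix Y : suffix w Y -> corr Y = corr w.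
Proof. by move=> sfx; apply: eq_bigr => i _; rewrite (suffix_take_suffix _ sfx). Qed.

Lemma sum_suffix_take_rcons i X : (i < p)%N ->
  \sum_a ((suffix (take i.+1 w) (rcons X a))%:R : R) = (suffix (take i w) X)%:R.
Proof.
move=> lt_ip; pose x0 := Ordinal b_gt0.
under eq_bigr do rewrite (suffix_take_rcons x0 _ _ lt_ip).
rewrite (bigD1 (nth x0 w i)) //= eqxx big1 ?addr0 // => a ne_a.
by rewrite eq_sym (negPf ne_a).
Qed.

Lemma sum_overlap_rcons n X : (n <= p)%N ->
  \sum_a overlap n.+1 (rcons X a) = q * (1 + overlap n X).
Proof.
move=> le_np; rewrite exchange_big big_ord_recl mulrDr mulr1 /=; congr (_ + _).
  by under eq_bigr do rewrite take0 suffix0s mulr1; rewrite sumr_const card_ord.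
rewrite /overlap mulr_sumr; apply: eq_bigr => i _.
by rewrite -mulr_sumr sum_suffix_take_rcons ?exprS ?mulrA // (leq_trans _ le_np).
Qed.

Definition potential j X : R :=
  if (j < kw w X)%N then q ^+ p else if kw w X == j then corr X - corr w else 0.

Definition ind_kw_eq j X : R := (kw w X == j)%:R.

Definition ind_kw_le j X : R := (kw w X <= j)%:R.

Lemma potential_rcons_above j X a : (j < kw w X)%N -> potential j (rcons X a) = q ^+ p.
Proof. by move=> lt_jX; rewrite /potential (leq_trans lt_jX (leq_kw_rcons _ _ _)). Qed.

Lemma potential_rcons_below j X a : (kw w X < j)%N -> potential j (rcons X a) = 0.
Proof.
move=> lt_Xj; rewrite /potential kw_rcons //.
case: (boolP (suffix w _)) => [sfx|_] /=.
  by rewrite addn1 ltnNge lt_Xj /= overlap_suffix // subrr if_same.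
by rewrite addn0 ltnNge (ltnW lt_Xj) /= (ltn_eqF lt_Xj).
Qed.

(* The jump from level [j] to [j.+1] is absorbed by the top term [b ^ p] of
   [overlap p.+1]. *)
Lemma potential_rcons_level j X a : kw w X = j ->
  potential j (rcons X a) = overlap p.+1 (rcons X a) - corr w.
Proof.
move=> <-; rewrite /potential overlapS take_size kw_rcons //.
case: (boolP (suffix w _)) => [sfx|_] /=.
  by rewrite addn1 ltnSn mulr1 overlap_suffix // addrC addKr.
by rewrite addn0 ltnn eqxx mulr0 addr0.
Qed.

Lemma potential_step j X :
  q^-1 * \sum_a potential j (rcons X a) = potential j X + ind_kw_eq j X.
Proof.
rewrite {2}/potential /ind_kw_eq; case: ltngtP => [lt_jX|lt_Xj|eq_jX] /=.
- under eq_bigr do rewrite potential_rcons_above //.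
  by rewrite sumr_const card_ord -[q ^+ p *+ b]mulr_natl mulKf // addr0.
- by rewrite big1 ?mulr0 ?addr0 // => a _; rewrite potential_rcons_below.
under eq_bigr do rewrite potential_rcons_level //.
rewrite sumrB sum_overlap_rcons // sumr_const card_ord -[corr w *+ b]mulr_natl.
by field.
Qed.

Lemma potential_le j X : potential j X <= q ^+ p.
Proof.
rewrite /potential; case: ifP => _ //; case: ifP => _ //.
by rewrite lerBlDr (le_trans (overlap_le _ _)) // lerDl overlap_ge0.
Qed.

Lemma potential_ge j X : q ^+ p - 2 * q ^+ p * ind_kw_le j X <= potential j X.
Proof.
rewrite /potential /ind_kw_le; case: ltnP => _ /=; first by rewrite mulr0 subr0.
rewrite mulr1.
have := overlap_ge0 p X; have := overlap_le p w; have := qXp_ge0.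
by case: ifP => _; lra.
Qed.

Lemma potential_ge_opp j X : - q ^+ p <= potential j X.
Proof.
apply: le_trans (potential_ge j X); have := qXp_ge0.
by rewrite /ind_kw_le; case: leqP => _ /=; rewrite ?mulr1 ?mulr0; lra.
Qed.

Lemma mean_potential j n X :
  mean (potential j) n X = potential j X + \sum_(m < n) mean (ind_kw_eq j) m X.
Proof.
elim: n X => [|n IHn] X; first by rewrite mean0 big_ord0 addr0.
rewrite meanS; under eq_bigr do rewrite IHn.
rewrite big_split /= mulrDr potential_step big_ord_recl mean0 -addrA.
by rewrite exchange_big mulr_sumr; under [in RHS]eq_bigr do rewrite meanS.
Qed.

Lemma sum_ind_kw_eq j X : \sum_(i < j.+1) ind_kw_eq i X = ind_kw_le j X.
Proof.
rewrite /ind_kw_eq /ind_kw_le; case: leqP => [le_Xj|lt_jX].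
  rewrite (bigD1 (Ordinal (le_Xj : kw w X < j.+1)%N)) //= eqxx big1 ?addr0 // => i.
  by rewrite -val_eqE /= eq_sym => /negPf ->.
by rewrite big1 // => i _; rewrite gtn_eqF // (leq_trans (ltn_ord i) lt_jX).
Qed.

Lemma mean_ind_kw_le_decay j n X :
  n%:R * mean (ind_kw_le j) n X <= (j.+1)%:R * (2 * q ^+ p).
Proof.
have ind_rcons Y a : ind_kw_le j (rcons Y a) <= ind_kw_le j Y.
  rewrite ler_nat; case: (leqP (kw w (rcons Y a)) j) => // le_Yj.
  by rewrite (leq_trans (leq_kw_rcons _ _ _) le_Yj).
have -> : n%:R * mean (ind_kw_le j) n X = \sum_(m < n) mean (ind_kw_le j) n X.
  by rewrite sumr_const card_ord mulr_natl.
apply: le_trans (_ : \sum_(m < n) mean (ind_kw_le j) m X <= _).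
  by apply: ler_sum => m _; apply: (mean_nonincreasing b_gt0 _ ind_rcons); exact: ltnW.
have -> : ind_kw_le j = fun Y => \sum_(i < j.+1) ind_kw_eq i Y.
  by apply/funext => Y; rewrite sum_ind_kw_eq.
under eq_bigr do rewrite mean_sum.
have -> : (j.+1)%:R * (2 * q ^+ p) = \sum_(i < j.+1) 2 * q ^+ p.
  by rewrite sumr_const card_ord mulr_natl.
rewrite exchange_big; apply: ler_sum => i _.
have mean_le : mean (potential i) n X <= q ^+ p.
  by rewrite -(mean_cst b_gt0 (q ^+ p) n X); exact: ler_mean (potential_le i).
have := mean_potential i n X; have := potential_ge_opp i X; lra.
Qed.

Lemma sum_mean_ind_kw_eq k s n : (kw w s < k)%N ->
  \sum_(m < n) mean (ind_kw_eq k) m s = mean (potential k) n s.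
Proof.
move=> lt_sk.
by rewrite mean_potential /potential ltnNge (ltnW lt_sk) (ltn_eqF lt_sk) add0r.
Qed.

Lemma sum_mean_ind_kw_eq_le k s n : (kw w s < k)%N ->
  \sum_(m < n) mean (ind_kw_eq k) m s <= q ^+ p.
Proof.
move=> lt_sk; rewrite sum_mean_ind_kw_eq // -(mean_cst b_gt0 (q ^+ p) n s).
exact: ler_mean (potential_le k).
Qed.

Lemma sum_mean_ind_kw_eq_rate k s n : (kw w s < k)%N ->
  n%:R * (q ^+ p - \sum_(m < n) mean (ind_kw_eq k) m s)
    <= 2 * q ^+ p * ((k.+1)%:R * (2 * q ^+ p)).
Proof.
move=> lt_sk; rewrite sum_mean_ind_kw_eq //.
have mean_ge : q ^+ p - 2 * q ^+ p * mean (ind_kw_le k) n s <= mean (potential k) n s.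
  rewrite -mulNr -mean_affine //; apply: ler_mean => Y.
  by rewrite mulNr; exact: potential_ge.
have := mean_ind_kw_le_decay k n s; have := qXp_ge0.
have : 0 <= (n%:R : R) by rewrite ler0n.
nra.
Qed.

End Potential.

Lemma esum_exhaustion (R : realType) (T : choiceType) (D : set T) (f : T -> R)
    (E : nat -> seq T) (t : R) :
  (forall x, 0 <= f x) -> (forall n, uniq (E n)) -> (forall n x, x \in E n -> D x) ->
  (forall s : seq T, [set` s] `<=` D -> exists n, {subset s <= E n}) ->
  (forall n, \sum_(x <- E n) f x <= t) ->
  (forall e, 0 < e -> exists n, t - e <= \sum_(x <- E n) f x) ->
  (\esum_(x in D) (f x)%:E = t%:E)%E.
Proof.
move=> f_ge0 E_uniq E_D E_exhaust E_le E_approx.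
apply/eqP; rewrite eq_le; apply/andP; split.
  apply: ge_ereal_sup => _ [F [finF FD] <-].
  have [s Fs] := (finite_seqP F).1 finF.
  have [n sE] : exists n, {subset s <= E n} by apply: E_exhaust; rewrite -Fs.
  apply: (@le_trans _ _ (\sum_(x \in [set` E n]) (f x)%:E)%E).
    apply: lee_fsum_nneg_subset => [//||x|x _]; first exact: finite_seq.
      by rewrite Fs !inE /=; exact: sE.
    by rewrite lee_fin.
  by rewrite -fsbig_seq // sumEFin lee_fin.
apply/lee_addgt0Pr => e e_gt0; have [n le_En] := E_approx e e_gt0.
have sum_le_esum : ((\sum_(x <- E n) f x)%:E <= \esum_(x in D) (f x)%:E)%E.
  apply: esum_ge; exists [set` E n]; last by rewrite -fsbig_seq // sumEFin.
  by split; [exact: finite_seq | move=> x /= /E_D].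
apply: le_trans (_ : ((\sum_(x <- E n) f x)%:E + e%:E <= _)%E).
  by rewrite -EFinD lee_fin -lerBlDr.
by rewrite leeD2r.
Qed.

Lemma approx_of_rate (R : realType) (t C : R) (u : nat -> R) :
  (forall n, n%:R * (t - u n) <= C) -> forall e, 0 < e -> exists n, t - e <= u n.
Proof.
move=> rate e e_gt0.
have C_ge0 : 0 <= C by have := rate 0%N; rewrite mulr0n mul0r.
have Ce_ge0 : 0 <= C / e by rewrite divr_ge0 // ltW.
have := archi_boundP Ce_ge0; set n := Num.bound _ => lt_n.
exists n; suff : t - u n <= e by lra.
have n_gt0 : 0 < (n%:R : R) by apply: le_lt_trans lt_n.
rewrite -(ler_pM2l n_gt0); apply: le_trans (rate n) _.
by rewrite -ler_pdivrMr // ltW.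
Qed.

Section Counting.
Variables (R : realType) (b : nat) (w : seq 'I_b).
Hypotheses (b_ge2 : (2 <= b)%N) (w_neq0 : w != [::]).
Local Notation p := (size w).
Local Notation q := (b%:R : R).
Local Notation mean := (@mean R b).
Local Notation words := (@words b).
Local Notation ind_kw_eq := (@ind_kw_eq R b w).
Implicit Types (s t X : seq 'I_b).

Fixpoint words_lt n : seq (seq 'I_b) := if n is m.+1 then words_lt m ++ words m else [::].

Lemma mem_words_lt n t : (t \in words_lt n) = (size t < n)%N.
Proof.
elim: n => [|n IHn] //=.
by rewrite mem_cat IHn mem_words ltnS [(size t <= n)%N]leq_eqVlt orbC.
Qed.

Lemma uniq_words_lt n : uniq (words_lt n).
Proof.
elim: n => [|n IHn] //=; rewrite cat_uniq IHn uniq_words andbT /=.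
by apply/hasPn => t; rewrite mem_words mem_words_lt => /eqP ->; rewrite ltnn.
Qed.

Lemma big_words_lt (F : seq 'I_b -> R) n :
  \sum_(t <- words_lt n) F t = \sum_(m < n) \sum_(t <- words m) F t.
Proof. by elim: n => [|n IHn]; rewrite ?big_nil ?big_ord0 //= big_cat IHn big_ord_recr. Qed.

Definition extensions s k n := [seq s ++ t | t <- words_lt n & kw w (s ++ t) == k].

Lemma sum_extensions s k n :
  \sum_(X <- extensions s k n) q ^- size X
    = q ^- size s * \sum_(m < n) mean (ind_kw_eq k) m s.
Proof.
rewrite big_map big_filter big_mkcond big_words_lt mulr_sumr; apply: eq_bigr => m _.
rewrite /mean mulrA -invfM -exprD mulr_sumr big_seq [RHS]big_seq.
apply: eq_bigr => t; rewrite mem_words => /eqP size_t.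
by rewrite /ind_kw_eq size_cat size_t; case: eqP; rewrite ?mulr1 ?mulr0.
Qed.

Lemma Nw_mean k l : (Nw w k l)%:R * q ^- l = mean (ind_kw_eq k) l [::].
Proof.
rewrite /mean mulrC /Nw -sum1dep_card natr_sum; congr (_ * _).
have words_tuples : perm_eq [seq val X | X : l.-tuple 'I_b] (words l).
  apply: uniq_perm; first by rewrite map_inj_uniq ?enum_uniq //; exact: val_inj.
    exact: uniq_words.
  move=> t; rewrite mem_words; apply/mapP/idP => [[X _ ->]|size_t].
    by rewrite size_tuple.
  by exists (Tuple size_t) => //; rewrite mem_enum.
rewrite -(perm_big _ words_tuples) big_map big_enum big_mkcond /=.
by apply: eq_bigr => X _; rewrite /ind_kw_eq; case: eqP.
Qed.

Let qV_ge0 n : 0 <= q ^- n. Proof. by rewrite invr_ge0 exprn_ge0 ?ler0n. Qed.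

Lemma esum_kw_eq_prefix s k : (kw w s < k)%N ->
  (\esum_(X in [set X | kw w X = k /\ prefix s X]) (q ^- size X)%:E
    = (q ^+ p * q ^- size s)%:E)%E.
Proof.
move=> lt_sk; apply: (esum_exhaustion (E := extensions s k)) => //.
- move=> n; rewrite map_inj_uniq ?filter_uniq ?uniq_words_lt // => t u /eqP.
  by rewrite eqseq_cat // eqxx => /eqP.
- move=> n X /mapP[t]; rewrite mem_filter => /andP[/eqP kw_st _] ->.
  by split; [exact: kw_st | exact: prefix_prefix].
- move=> F F_sub; exists (\max_(X <- F) size X).+1 => X X_F.
  have [kw_X /prefixP[t X_st]] := F_sub X X_F.
  rewrite X_st map_f // mem_filter -X_st kw_X eqxx mem_words_lt ltnS.
  by rewrite (leq_trans _ (leq_bigmax_seq (F := size) _ X_F isT)) // X_st size_cat leq_addl.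
- by move=> n; rewrite sum_extensions mulrC ler_wpM2r // sum_mean_ind_kw_eq_le.
apply: (approx_of_rate (C := q ^- size s * (2 * q ^+ p * ((k.+1)%:R * (2 * q ^+ p)))))
  => n.
rewrite sum_extensions [q ^+ p * _]mulrC -mulrBr mulrCA ler_wpM2l //.
exact: sum_mean_ind_kw_eq_rate.
Qed.

Lemma series_Nw k : (0 < k)%N ->
  (\sum_(0 <= l <oo) ((Nw w k l)%:R * q ^- l)%:E = (q ^+ p)%:E)%E.
Proof.
move=> k_gt0; have lt_0k : (kw w [::] < k)%N by [].
have Nw_ge0 l : 0 <= (Nw w k l)%:R * q ^- l by rewrite mulr_ge0 ?ler0n.
rewrite nneseries_esumT => [|l]; last by rewrite lee_fin.
apply: (esum_exhaustion (E := index_iota 0)) => //.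
- by move=> n; exact: iota_uniq.
- move=> F _; exists (\max_(l <- F) l).+1 => l l_F.
  by rewrite mem_index_iota ltnS (leq_bigmax_seq (F := id) _ l_F isT).
- move=> n; rewrite big_mkord; under eq_bigr do rewrite Nw_mean.
  exact: sum_mean_ind_kw_eq_le.
apply: (approx_of_rate (C := 2 * q ^+ p * ((k.+1)%:R * (2 * q ^+ p)))) => n.
rewrite big_mkord; under eq_bigr do rewrite Nw_mean.
exact: sum_mean_ind_kw_eq_rate.
Qed.

End Counting.

Theorem theorem3 (R : realType) (b : nat) (w : seq 'I_b) :
  (2 <= b)%N -> (1 <= size w)%N ->
  (forall (s : seq 'I_b) (k : nat), (1 + kw_star w s <= k)%N ->
     (\esum_(X in [set X : seq 'I_b | kw w X = k /\ prefix s X])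
        ((b%:R : R) ^- size X)%:E)
     = ((b%:R : R) ^+ size w * (b%:R : R) ^- size s)%:E)
  /\
  (forall k : nat, (1 <= k)%N ->
     (\sum_(0 <= l <oo) ((Nw w k l)%:R * (b%:R : R) ^- l)%:E
        = ((b%:R : R) ^+ size w)%:E)%E
     /\
     (\esum_(X in [set X : seq 'I_b | kw w X = k]) ((b%:R : R) ^- size X)%:E)
        = ((b%:R : R) ^+ size w)%:E).
Proof.
move=> b_ge2 w_gt0; have w_neq0 : w != [::] by rewrite -size_eq0 -lt0n.
split=> [s k lt_star_k | k k_gt0].
  by apply: esum_kw_eq_prefix => //; exact: leq_ltn_trans (leq_kw_star w_neq0 s) lt_star_k.
split; first exact: series_Nw.
have -> : [set X | kw w X = k] = [set X | kw w X = k /\ prefix [::] X].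
  apply/seteqP; split=> X /=; first by move=> kw_X; split; last exact: prefix0s.
  by case.
have := esum_kw_eq_prefix R b_ge2 w_neq0 (k_gt0 : kw w [::] < k)%N.
by rewrite expr0 invr1 mulr1.
Qed.
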